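(* For every $m\in\mathbb N$, \[ \frac{e^m}{m^{1/4}e^2}\le\Big(\sum_{j=0}^m\Big(\frac{m^j}{j!}\Big)^2\Big)^{1/2}\le\frac{e^m}{m^{1/4}}. \] *)

From Stdlib Require Export Reals Factorial.
Open Scope R_scope.

(* S m = sum_{j=0}^m (m^j / j!)^2 ; note sum_f_R0 f m has the m+1 terms j = 0..m *)
Definition Ssq (m : nat) : R :=
  sum_f_R0 (fun j => (INR m ^ j / INR (fact j)) ^ 2) m.

(** With a_j = m^j / j!, the largest term is a_m, and Stirling-type bounds
    ln m! = m ln m - m + (ln m)/2 + O(1) give e^(m-1)/sqrt m <= a_m <= e^m/sqrt m.
    Upper bound: sum a_j^2 <= a_m sum a_j <= a_m e^m.  Lower bound: going down
    from the mode, a_(m-i) >= a_m (1 - i(i-1)/(2m)), so the sqrt m + 1 terms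
    nearest the mode already contribute at least (2/3) sqrt m a_m^2. *)

From Stdlib Require Import Reals Lra Lia Psatz.
From Coquelicot Require Import Coquelicot.
Open Scope R_scope.

Lemma exp_le_exp_of_le (x y : R) : x <= y -> exp x <= exp y.
Proof. intros [hlt | ->]; [left; apply exp_increasing |]; lra. Qed.

Lemma ln_1p_le_cubic (x : R) : 0 < x -> ln (1 + x) <= x - x ^ 2 / 2 + x ^ 3 / 3.
Proof.
  intros hx.
  set (f := fun t => t - t ^ 2 / 2 + t ^ 3 / 3 - ln (1 + t)).
  destruct (MVT_cor2 f (fun t => t ^ 3 / (1 + t)) 0 x hx) as [c [Hc Hc0x]].
  { intros c Hc. apply is_derive_Reals. unfold f. auto_derive; [lra | field; lra]. }
  assert (0 <= c ^ 3 / (1 + c)) by (apply Rdiv_le_0_compat; [apply pow_le |]; lra).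
  assert (f 0 = 0) by (unfold f; rewrite Rplus_0_r, ln_1; field).
  unfold f in *. nra.
Qed.

Lemma ln_1p_ge_pade (x : R) : 0 < x -> 2 * x / (2 + x) <= ln (1 + x).
Proof.
  intros hx.
  set (f := fun t => ln (1 + t) - 2 * t / (2 + t)).
  destruct (MVT_cor2 f (fun t => t ^ 2 / ((1 + t) * (2 + t) ^ 2)) 0 x hx) as [c [Hc Hc0x]].
  { intros c Hc. apply is_derive_Reals. unfold f. auto_derive; [lra | field; lra]. }
  assert (0 <= c ^ 2 / ((1 + c) * (2 + c) ^ 2)).
  { apply Rdiv_le_0_compat; [apply pow2_ge_0 |].
    apply Rmult_lt_0_compat; [| apply pow_lt]; lra. }
  assert (f 0 = 0) by (unfold f; rewrite Rplus_0_r, ln_1; field).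
  unfold f in *. nra.
Qed.

Lemma ln_1p_inv_bounds (n : R) : 1 <= n ->
  1 <= (n + 1 / 2) * ln (1 + / n) <= 1 + / n - / (n + 1).
Proof.
  intros hn.
  assert (hx : 0 < / n) by (apply Rinv_0_lt_compat; lra).
  split.
  - apply Rle_trans with ((n + 1 / 2) * (2 * / n / (2 + / n))).
    + right. field. lra.
    + apply Rmult_le_compat_l; [lra | now apply ln_1p_ge_pade].
  - apply Rle_trans with ((n + 1 / 2) * (/ n - (/ n) ^ 2 / 2 + (/ n) ^ 3 / 3)).
    + apply Rmult_le_compat_l; [lra | now apply ln_1p_le_cubic].
    + assert (slack : 0 <= (11 * n ^ 2 - 3 * n - 2) / (12 * n ^ 3 * (n + 1))).
      { apply Rdiv_le_0_compat; [nra |].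
        assert (0 < n ^ 3) by (apply pow_lt; lra). nra. }
      assert (E : (n + 1 / 2) * (/ n - (/ n) ^ 2 / 2 + (/ n) ^ 3 / 3)
                  = 1 + / n - / (n + 1) - (11 * n ^ 2 - 3 * n - 2) / (12 * n ^ 3 * (n + 1)))
        by (field; lra).
      lra.
Qed.

Definition stirling_approx (x : R) : R := x * ln x - x + ln x / 2.

(* The lower bound carries the extra [/ x] so that the induction closes. *)
Lemma ln_fact_bounds (m : nat) : (1 <= m)%nat ->
  stirling_approx (INR m) + / INR m <= ln (INR (fact m)) <= stirling_approx (INR m) + 1.
Proof.
  unfold stirling_approx.
  induction 1 as [| m hm IH].
  - simpl. rewrite ln_1. lra.
  - set (n := INR m) in *.
    assert (hn : 1 <= n) by (apply (le_INR 1); exact hm).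
    assert (hF : 0 < INR (fact m)) by apply INR_fact_lt_0.
    rewrite fact_simpl, mult_INR, S_INR. fold n. rewrite ln_mult by lra.
    assert (hsplit : ln (n + 1) = ln n + ln (1 + / n)).
    { assert (0 < / n) by (apply Rinv_0_lt_compat; lra).
      rewrite <- ln_mult by lra. f_equal. field. lra. }
    pose proof (ln_1p_inv_bounds n hn).
    rewrite hsplit. nra.
Qed.

Definition exp_term (x : R) (j : nat) : R := x ^ j / INR (fact j).

Lemma exp_term_nonneg (x : R) (j : nat) : 0 <= x -> 0 <= exp_term x j.
Proof. intros hx. apply Rdiv_le_0_compat; [now apply pow_le | apply INR_fact_lt_0]. Qed.

Lemma exp_term_succ (x : R) (j : nat) : exp_term x (S j) = exp_term x j * x / INR (S j).
Proof.
  unfold exp_term. rewrite fact_simpl, mult_INR. simpl pow.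
  pose proof (INR_fact_lt_0 j). pose proof (lt_0_INR (S j) (Nat.lt_0_succ j)).
  field. lra.
Qed.

Lemma exp_term_mode_bounds (m : nat) : (1 <= m)%nat ->
  exp (INR m - 1) / sqrt (INR m) <= exp_term (INR m) m <= exp (INR m) / sqrt (INR m).
Proof.
  intros hm.
  assert (hM : 0 < INR m) by (apply lt_0_INR; lia).
  pose proof (ln_fact_bounds m hm) as hF. unfold stirling_approx in hF.
  assert (hinv : 0 < / INR m) by now apply Rinv_0_lt_compat.
  assert (exp_div : forall a b, exp a / exp b = exp (a - b)).
  { intros a b. unfold Rminus. rewrite exp_plus, exp_Ropp. reflexivity. }
  unfold exp_term.
  rewrite <- (exp_ln (INR m ^ m)) by (apply pow_lt; lra).
  rewrite <- (exp_ln (INR (fact m))) by apply INR_fact_lt_0.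
  rewrite <- Rpower_sqrt, ln_pow by lra. unfold Rpower.
  rewrite !exp_div.
  split; apply exp_le_exp_of_le; lra.
Qed.

Lemma exp_term_below_mode (m i : nat) : (S i <= m)%nat ->
  exp_term (INR m) (m - S i) = exp_term (INR m) (m - i) * (1 - INR i / INR m).
Proof.
  intros hi.
  assert (hM : 0 < INR m) by (apply lt_0_INR; lia).
  replace (m - i)%nat with (S (m - S i)) at 1 by lia.
  rewrite exp_term_succ.
  replace (S (m - S i)) with (m - i)%nat by lia.
  rewrite minus_INR by lia.
  assert (INR i < INR m) by (apply lt_INR; lia).
  field. lra.
Qed.

Lemma INR_ratio_bounds (i m : nat) : (i <= m)%nat -> (0 < m)%nat -> 0 <= INR i / INR m <= 1.
Proof.
  intros him hm.
  assert (hM : 0 < INR m) by now apply lt_0_INR.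
  split; [apply Rdiv_le_0_compat | apply (Rdiv_le_1 _ _ hM)]; auto with real.
Qed.

Lemma exp_term_le_mode (m j : nat) : (j <= m)%nat -> exp_term (INR m) j <= exp_term (INR m) m.
Proof.
  intros hj. replace j with (m - (m - j))%nat by lia.
  generalize (Nat.le_sub_l m j). generalize (m - j)%nat as i.
  induction i as [| i IH]; intros hi.
  - rewrite Nat.sub_0_r. lra.
  - rewrite exp_term_below_mode by exact hi.
    pose proof (exp_term_nonneg (INR m) (m - i) (pos_INR m)).
    pose proof (INR_ratio_bounds i m ltac:(lia) ltac:(lia)).
    specialize (IH ltac:(lia)). nra.
Qed.

(* a_(m-i) = a_m prod_(k<i) (1 - k/m) >= a_m (1 - sum_(k<i) k/m). *)
Lemma exp_term_near_mode_lower (m i : nat) : (i <= m)%nat ->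
  exp_term (INR m) m * (1 - INR i * (INR i - 1) / (2 * INR m)) <= exp_term (INR m) (m - i).
Proof.
  induction i as [| i IH]; intros hi.
  - rewrite Nat.sub_0_r. simpl. lra.
  - assert (hM : 0 < INR m) by (apply lt_0_INR; lia).
    rewrite exp_term_below_mode by exact hi.
    specialize (IH ltac:(lia)).
    set (c := 1 - INR i * (INR i - 1) / (2 * INR m)) in IH.
    set (t := INR i / INR m).
    assert (ht : 0 <= t <= 1) by (apply INR_ratio_bounds; lia).
    assert (hc : c <= 1).
    { assert (0 <= INR i * (INR i - 1) / (2 * INR m)); [| unfold c; lra].
      apply Rdiv_le_0_compat; [| lra].
      destruct i; [simpl; lra |].
      rewrite S_INR. pose proof (pos_INR i). nra. }
    replace (1 - INR (S i) * (INR (S i) - 1) / (2 * INR m)) with (c - t)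
      by (unfold c, t; rewrite S_INR; field; lra).
    set (a := exp_term (INR m) m) in *.
    assert (0 <= a) by apply exp_term_nonneg, pos_INR.
    assert (a * c * (1 - t) <= exp_term (INR m) (m - i) * (1 - t))
      by (apply Rmult_le_compat_r; lra).
    assert (0 <= a * ((1 - c) * t)) by (apply Rmult_le_pos; [| apply Rmult_le_pos]; lra).
    lra.
Qed.

Lemma sum_f_R0_le_longer (f : nat -> R) (K n : nat) :
  (K <= n)%nat -> (forall i, 0 <= f i) -> sum_f_R0 f K <= sum_f_R0 f n.
Proof.
  intros hK hf. induction hK as [| n hK IH]; [lra |].
  simpl. specialize (hf (S n)). lra.
Qed.

Lemma sum_one_sub_quadratic (M : R) (K : nat) : M <> 0 ->
  sum_f_R0 (fun i => 1 - INR i * (INR i - 1) / M) K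
  = (INR K + 1) * (1 - INR K * (INR K - 1) / (3 * M)).
Proof.
  intros hM. induction K as [| K IH].
  - simpl. field. exact hM.
  - rewrite tech5, IH, S_INR. field. exact hM.
Qed.

Lemma sq_ge_of_mul_le (A B c : R) : 0 <= A -> A * c <= B -> (2 * c - 1) * A ^ 2 <= B ^ 2.
Proof.
  intros hA hAcB.
  destruct (Rle_lt_dec 0 c) as [hc | hc].
  - assert ((A * c) ^ 2 <= B ^ 2) by (apply pow_incr; split; [apply Rmult_le_pos |]; lra).
    assert (0 <= (c - 1) ^ 2 * A ^ 2) by (apply Rmult_le_pos; apply pow2_ge_0).
    nra.
  - assert (0 <= A ^ 2) by apply pow2_ge_0. assert (0 <= B ^ 2) by apply pow2_ge_0. nra.
Qed.

Lemma Ssq_exp_term (m : nat) : Ssq m = sum_f_R0 (fun j => exp_term (INR m) j ^ 2) m.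
Proof. reflexivity. Qed.

Lemma Ssq_le_mode_mul_exp (m : nat) : Ssq m <= exp_term (INR m) m * exp (INR m).
Proof.
  rewrite Ssq_exp_term.
  apply Rle_trans with (sum_f_R0 (fun j => exp_term (INR m) j * exp_term (INR m) m) m).
  - apply sum_Rle. intros j hj.
    pose proof (exp_term_le_mode m j hj).
    pose proof (exp_term_nonneg (INR m) j (pos_INR m)).
    simpl. nra.
  - rewrite <- scal_sum. apply Rmult_le_compat_l; [apply exp_term_nonneg, pos_INR |].
    apply exp_ge_taylor, pos_INR.
Qed.

Lemma Ssq_ge_mode_sq (m : nat) : (1 <= m)%nat ->
  2 / 3 * (INR (Nat.sqrt m) + 1) * exp_term (INR m) m ^ 2 <= Ssq m.
Proof.
  intros hm.
  assert (hM : 0 < INR m) by (apply lt_0_INR; lia).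
  set (K := Nat.sqrt m).
  assert (hKm : (K <= m)%nat) by apply Nat.sqrt_le_lin.
  assert (hK2 : INR K * INR K <= INR m)
    by (rewrite <- mult_INR; apply le_INR, Nat.sqrt_spec; lia).
  set (a := exp_term (INR m)).
  rewrite Ssq_exp_term, <- (sum_f_R0_skip (fun j => a j ^ 2)).
  apply Rle_trans with (sum_f_R0 (fun i => a (m - i)%nat ^ 2) K).
  2: { apply sum_f_R0_le_longer; [exact hKm | intros; apply pow2_ge_0]. }
  apply Rle_trans with (sum_f_R0 (fun i => (1 - INR i * (INR i - 1) / INR m) * a m ^ 2) K).
  2: { apply sum_Rle. intros i hi.
       replace (1 - INR i * (INR i - 1) / INR m)
         with (2 * (1 - INR i * (INR i - 1) / (2 * INR m)) - 1) by (field; lra).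
       apply sq_ge_of_mul_le; [apply exp_term_nonneg, pos_INR |].
       apply exp_term_near_mode_lower. lia. }
  rewrite <- scal_sum, sum_one_sub_quadratic by lra.
  pose proof (pos_INR K).
  assert (hr : INR K * (INR K - 1) / INR m <= 1) by (apply (Rdiv_le_1 _ _ hM); nra).
  replace (INR K * (INR K - 1) / (3 * INR m)) with (INR K * (INR K - 1) / INR m / 3)
    by (field; lra).
  assert (0 <= (INR K + 1) * a m ^ 2 * (1 - INR K * (INR K - 1) / INR m))
    by (apply Rmult_le_pos; [apply Rmult_le_pos; [| apply pow2_ge_0] |]; lra).
  lra.
Qed.

Lemma Ssq_upper (m : nat) : (1 <= m)%nat -> Ssq m <= exp (INR m) ^ 2 / sqrt (INR m).
Proof.
  intros hm.
  assert (hs : 0 < sqrt (INR m)) by (apply sqrt_lt_R0, lt_0_INR; lia).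
  apply Rle_trans with (exp_term (INR m) m * exp (INR m)); [apply Ssq_le_mode_mul_exp |].
  replace (exp (INR m) ^ 2 / sqrt (INR m)) with (exp (INR m) / sqrt (INR m) * exp (INR m))
    by (field; lra).
  apply Rmult_le_compat_r; [left; apply exp_pos | apply exp_term_mode_bounds, hm].
Qed.

Lemma Ssq_lower (m : nat) : (1 <= m)%nat -> exp (INR m - 2) ^ 2 / sqrt (INR m) <= Ssq m.
Proof.
  intros hm.
  assert (hM : 0 < INR m) by (apply lt_0_INR; lia).
  set (s := sqrt (INR m)).
  assert (hs : 0 < s) by now apply sqrt_lt_R0.
  assert (hsK : s <= INR (Nat.sqrt m) + 1).
  { rewrite <- (sqrt_pow2 (INR (Nat.sqrt m) + 1)) by (pose proof (pos_INR (Nat.sqrt m)); lra).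
    apply sqrt_le_1_alt. rewrite <- S_INR, <- pow_INR. apply le_INR.
    simpl. rewrite Nat.mul_1_r. apply Nat.lt_le_incl, Nat.sqrt_spec. lia. }
  destruct (exp_term_mode_bounds m hm) as [hlo _]. fold s in hlo.
  assert (hmode : exp (INR m - 1) ^ 2 / s ^ 2 <= exp_term (INR m) m ^ 2).
  { replace (exp (INR m - 1) ^ 2 / s ^ 2) with ((exp (INR m - 1) / s) ^ 2) by (field; lra).
    apply pow_incr. split; [| exact hlo]. left. apply Rdiv_lt_0_compat; [apply exp_pos | lra]. }
  assert (he : 2 / 3 * exp 1 ^ 2 >= 1).
  { pose proof (exp_ineq1 1 ltac:(lra)). nra. }
  assert (hsplit : exp (INR m - 1) = exp (INR m - 2) * exp 1)
    by (rewrite <- exp_plus; f_equal; ring).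
  pose proof (Ssq_ge_mode_sq m hm) as hS.
  apply Rle_trans with (2 / 3 * s * (exp (INR m - 1) ^ 2 / s ^ 2)).
  - rewrite hsplit.
    replace (2 / 3 * s * ((exp (INR m - 2) * exp 1) ^ 2 / s ^ 2))
      with (exp (INR m - 2) ^ 2 / s * (2 / 3 * exp 1 ^ 2)) by (field; lra).
    assert (0 < exp (INR m - 2) ^ 2 / s) by (apply Rdiv_lt_0_compat; [apply pow_lt, exp_pos | lra]).
    nra.
  - apply Rle_trans with (2 / 3 * (INR (Nat.sqrt m) + 1) * exp_term (INR m) m ^ 2); [| exact hS].
    assert (0 <= exp (INR m - 1) ^ 2 / s ^ 2)
      by (apply Rdiv_le_0_compat; [apply pow2_ge_0 | apply pow_lt; lra]).
    apply Rmult_le_compat; lra.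
Qed.

Lemma le_sqrt_of_sq_le (y S : R) : 0 <= y -> y ^ 2 <= S -> y <= sqrt S.
Proof. intros hy hyS. rewrite <- (sqrt_pow2 y hy). now apply sqrt_le_1_alt. Qed.

Lemma sqrt_le_of_le_sq (y S : R) : 0 <= y -> S <= y ^ 2 -> sqrt S <= y.
Proof. intros hy hSy. rewrite <- (sqrt_pow2 y hy). now apply sqrt_le_1_alt. Qed.

Lemma Rpower_quarter_sq (x : R) : 0 < x -> Rpower x (1 / 4) ^ 2 = sqrt x.
Proof.
  intros hx. simpl. rewrite Rmult_1_r, <- Rpower_plus, <- Rpower_sqrt by exact hx.
  f_equal. field.
Qed.

Theorem lemmaA2 (m : nat) (hm : (1 <= m)%nat) :
  exp (INR m) / (Rpower (INR m) (1/4) * exp 2) <= sqrt (Ssq m) /\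
  sqrt (Ssq m) <= exp (INR m) / Rpower (INR m) (1/4).
Proof.
  assert (hM : 0 < INR m) by (apply lt_0_INR; lia).
  set (q := Rpower (INR m) (1 / 4)).
  assert (hq : 0 < q) by apply exp_pos.
  assert (hq2 : q ^ 2 = sqrt (INR m)) by now apply Rpower_quarter_sq.
  split.
  - replace (exp (INR m) / (q * exp 2)) with (exp (INR m - 2) / q).
    2: { unfold Rminus. rewrite exp_plus, exp_Ropp. field. split; [apply exp_neq_0 | lra]. }
    apply le_sqrt_of_sq_le; [left; apply Rdiv_lt_0_compat; [apply exp_pos | exact hq] |].
    replace ((exp (INR m - 2) / q) ^ 2) with (exp (INR m - 2) ^ 2 / q ^ 2) by (field; lra).
    rewrite hq2. now apply Ssq_lower.
  - apply sqrt_le_of_le_sq; [left; apply Rdiv_lt_0_compat; [apply exp_pos | exact hq] |].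
    replace ((exp (INR m) / q) ^ 2) with (exp (INR m) ^ 2 / q ^ 2) by (field; lra).
    rewrite hq2. now apply Ssq_upper.
Qed.
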